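(* Let $q>2$ be a prime power, let $n\ge1$ with $\gcd(n,q-1)=1$, let $f(x)$ be a monic irreducible polynomial of degree $n$ over $\mathbb{F}_q$, and let $\theta$ be a primitive element of $\mathbb{F}_q$. Let $R(x)$ be the remainder of $x^q-\theta x$ modulo $f(x)$, and let $\psi(x)=\sum_{u=0}^{n}\psi_u x^u\in\mathbb{F}_q[x]$ be the monic nonzero polynomial of least degree satisfying $$\sum_{u=0}^{n}\psi_u\,(R(x))^u\equiv 0\pmod{f(x)}.$$ Then $\psi(x)$ is an irreducible polynomial of degree $n$ over $\mathbb{F}_q$, and $F(x)=\psi(x^q-\theta x)/f(x)$ is an irreducible polynomial of degree $n(q-1)$ over $\mathbb{F}_q$.
   Context: A primitive element of $\mathbb{F}_q$ is a generator of the cyclic group $\mathbb{F}_q^*$. *)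

From HB Require Import structures.
From mathcomp Require Import all_boot all_order all_algebra all_fingroup all_field.
Set Implicit Arguments.
Unset Strict Implicit.
Unset Printing Implicit Defensive.

From HB Require Import structures.
From mathcomp Require Import all_boot all_order all_algebra all_fingroup all_field.
Import GRing.Theory.
Local Open Scope ring_scope.
Set Implicit Arguments.
Unset Strict Implicit.
Unset Printing Implicit Defensive.

(* Let a be a root of f in a finite extension of F_q, n = deg f, and put
   T(y) = y^q - theta y ([frob_sub theta]), an F_q-linear map. If T(y) = 0 with
   y <> 0 in a subfield K, then y = y^(q^[K:F_q]) = theta^[K:F_q] y, so q - 1 divides
   [K:F_q]. As n is coprime
   to q - 1 and q > 2, T is injective on F_q(a); it maps F_q(T a) into itself, hence
   onto it, so a lies in F_q(T a). The hypotheses on psi say that psi is a minimal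
   polynomial of T a, so psi is irreducible of degree [F_q(T a):F_q] = n.
   Now take c <> 0 with c^(q-1) = theta, so T c = 0 and T(a + c) = T a: a + c is a root
   of psi(x^q - theta x). The field F_q(a + c) contains F_q(T a) = F_q(a) and c, so its
   degree is divisible by n and by q - 1, hence at least n(q-1), the degree of
   psi(x^q - theta x)/f. In particular a + c is not a root of f, so it is a root of
   that quotient, which is therefore its minimal polynomial and irreducible. *)

Lemma size_XnsubZX (R : nzRingType) m (c : R) : (1 < m)%N -> size ('X^m - c *: 'X) = m.+1.
Proof.
move=> m_gt1; rewrite size_polyDl size_polyXn // size_polyN ltnS.
by apply: leq_trans (size_scale_leq _ _) _; rewrite size_polyX.
Qed.

Lemma size_comp_XnsubZX_divp (R : fieldType) (p f : {poly R}) n m (c : R) :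
  (1 < m)%N -> size p = n.+1 -> size f = n.+1 ->
  size ((p \Po ('X^m - c *: 'X)) %/ f) = (n * m.-1).+1.
Proof.
move=> m_gt1 sp sf; have sX := size_XnsubZX c m_gt1.
have pX0 : p \Po ('X^m - c *: 'X) != 0.
  by rewrite comp_poly_eq0 ?sX ?ltnS ?(ltnW m_gt1) // -size_poly_gt0 sp.
rewrite size_divp -?size_poly_gt0 ?sf // polySpred // size_comp_poly sp sX /=.
by rewrite -{1}(prednK (ltnW m_gt1)) mulnS -addnS addKn.
Qed.

Section RootsInExtension.

Variables (F : fieldType) (L : fieldExtType F).
Local Notation "p ^^" := (map_poly (in_alg L) p) (at level 2, format "p ^^").

Lemma root_map_comp (p r : {poly F}) (x : L) : root (p \Po r)^^ x = root p^^ r^^.[x].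
Proof. by rewrite /root map_comp_poly horner_comp. Qed.

Lemma horner_map_modp (f r : {poly F}) (x : L) : root f^^ x -> (r %% f)^^.[x] = r^^.[x].
Proof.
move=> fx; rewrite [in RHS](divp_eq r f) rmorphD rmorphM /= hornerD hornerM.
by rewrite (rootP fx) mulr0 add0r.
Qed.

Lemma irredp_dvdp_rootE (f p : {poly F}) (x : L) :
  irreducible_poly f -> root f^^ x -> (f %| p) = root p^^ x.
Proof.
move=> irr_f fx; apply/idP/idP => [/dvdpP[h ->] | px].
  by rewrite rmorphM rootM fx orbT.
have [gcd1 | gcdf] := irredp_XsubCP irr_f (dvdp_gcdl f p).
  have := coprimep_root (q := p^^) _ fx.
  by rewrite coprimep_map -gcdp_eqp1 (rootP px) eqxx => /(_ gcd1).
by rewrite -(eqp_dvdl _ gcdf) dvdp_gcdr.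
Qed.

Lemma dvdp_comp_rootE (f p r : {poly F}) (x : L) :
  irreducible_poly f -> root f^^ x -> (f %| p \Po r) = root p^^ r^^.[x].
Proof. by move=> irr_f fx; rewrite (irredp_dvdp_rootE _ irr_f fx) root_map_comp. Qed.

Lemma root_in_splitting_field (p r : {poly F}) :
  splittingFieldFor 1 p^^ {:L} -> r %| p -> (1 < size r)%N -> exists x : L, root r^^ x.
Proof.
case=> rs Dp _ rp sr.
have : r^^ %| \prod_(z <- rs) ('X - z%:P) by rewrite -(eqp_dvdr _ Dp) dvdp_map.
case/(dvdp_prod_XsubC (F := id)) => m; case: (mask m rs) => [|z zs] Dr.
  by move: Dr sr; rewrite big_nil => /eqp_size; rewrite size_map_poly size_poly1 => ->.
by exists z; rewrite (eqp_root Dr) root_prod_XsubC mem_head.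
Qed.

End RootsInExtension.

Section MinimalRootPolynomial.

Variables (F : fieldType) (L : fieldExtType F).
Local Notation "p ^^" := (map_poly (in_alg L) p) (at level 2, format "p ^^").

Lemma dim_adjoin_lt_size (x : L) (p : {poly F}) :
  p != 0 -> root p^^ x -> (\dim <<1; x>> < size p)%N.
Proof.
move=> p0 px; have: minPoly 1 x %| p^^.
  by apply: minPoly_dvdp => //; apply/polyOver1P; exists p.
move/dvdp_leq; rewrite map_poly_eq0 => /(_ p0).
by rewrite size_minPoly size_map_poly dim_Fadjoin dimv1 muln1.
Qed.

Lemma exists_root_poly_size_dim (x : L) :
  exists2 g : {poly F}, root g^^ x & size g = (\dim <<1; x>>).+1.
Proof.
have /polyOver1P[g Dg] := minPolyOver 1 x.
exists g; first by rewrite -Dg root_minPoly.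
by rewrite -(size_map_poly (in_alg L)) -Dg size_minPoly dim_Fadjoin dimv1 muln1.
Qed.

Variables (x : L) (p : {poly F}).
Hypotheses (p_neq0 : p != 0) (px : root p^^ x).
Hypothesis p_min : forall g : {poly F}, g != 0 -> root g^^ x -> (size p <= size g)%N.

Lemma size_min_root_poly : size p = (\dim <<1; x>>).+1.
Proof.
have [g gx sg] := exists_root_poly_size_dim x.
have g0 : g != 0 by rewrite -size_poly_gt0 sg.
by apply/eqP; rewrite eqn_leq dim_adjoin_lt_size // andbT -sg p_min.
Qed.

Lemma irredp_min_root_poly : irreducible_poly p.
Proof.
split=> [|d sd1 /dvdpP[h Dp]]; first by rewrite size_min_root_poly ltnS adim_gt0.
have [h0 d0] : h != 0 /\ d != 0 by apply/norP; rewrite -mulf_eq0 -Dp.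
move: px; rewrite Dp rmorphM rootM => /orP[hx | dx].
  have := p_min h0 hx; rewrite Dp size_mul // -ltnS prednK ?addn_gt0 ?size_poly_gt0 ?h0 //.
  by rewrite -addn1 leq_add2l leq_eqVlt ltnS leqn0 size_poly_eq0 (negPf sd1) (negPf d0).
have dvd_dp : d %| p by rewrite Dp dvdp_mulIr.
by rewrite -Dp -dvdp_size_eqp // eqn_leq dvdp_leq // p_min.
Qed.

End MinimalRootPolynomial.

Lemma size_irredp_root (F : fieldType) (L : fieldExtType F) (f : {poly F}) (x : L) :
  irreducible_poly f -> root (map_poly (in_alg L) f) x -> size f = (\dim <<1; x>>).+1.
Proof.
move=> irr_f fx; apply: (size_min_root_poly (irredp_neq0 irr_f) fx) => g g0 gx.
by apply: dvdp_leq g0 _; rewrite (irredp_dvdp_rootE _ irr_f fx).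
Qed.

Lemma memv_preim_stable_inj (K : fieldType) (vT : vectType K)
    (f : {linear vT -> vT}) (V W : {vspace vT}) (x : vT) :
  (V <= W)%VS -> {in V, forall v, f v \in V} ->
  {in W, forall w, f w = 0 -> w = 0} -> x \in W -> f x \in V -> x \in V.
Proof.
move=> sVW fV f_inj xW fxV; pose U := linfun f.
have VkerU : (V :&: lker U = 0)%VS.
  apply/eqP; rewrite -subv0; apply/subvP => y /memv_capP[yV].
  by rewrite memv_ker lfunE memv0 => /eqP/(f_inj _ (subvP sVW _ yV))->.
have UV : (U @: V)%VS = V.
  apply/eqP; rewrite eqEdim (limg_dim_eq VkerU) leqnn andbT.
  by apply/subvP => _ /memv_imgP[v vV ->]; rewrite lfunE fV.
move: fxV; rewrite -{1}UV => /memv_imgP[v vV]; rewrite lfunE => fxv.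
suff /eqP : x - v = 0 by rewrite subr_eq0 => /eqP->.
apply: f_inj; first by rewrite rpredB // (subvP sVW).
by rewrite linearB /= fxv subrr.
Qed.

Section FrobeniusSub.

Variables (F : finFieldType) (L : fieldExtType F).
Local Notation q := #|F|.
Local Notation "p ^^" := (map_poly (in_alg L) p) (at level 2, format "p ^^").

Lemma expr_card_alg (a : F) k : (a%:A : L) ^+ (q ^ k) = a%:A.
Proof.
elim: k => [|k IHk]; first by rewrite expr1.
by rewrite expnSr exprM IHk -in_algE -rmorphXn /= expf_card.
Qed.

Lemma expr_cardD (x y : L) : (x + y) ^+ q = x ^+ q + y ^+ q.
Proof.
have [p _ pcharFp] := finPcharP F; rewrite (card_pprimeChar pcharFp).
have pcharLp : p \in [pchar L] by rewrite (pchar_lalg L).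
elim: (logn _ _) => [|k IHk]; first by rewrite !expr1.
by rewrite expnSr !exprM IHk -!(pFrobenius_autE pcharLp) rmorphD.
Qed.

Variable theta : F.

Definition frob_sub (y : L) := y ^+ q - theta%:A * y.

Lemma frob_sub_is_zmod_morphism : zmod_morphism frob_sub.
Proof.
move=> x y; have qB : (x - y) ^+ q = x ^+ q - y ^+ q.
  by apply: (addIr (y ^+ q)); rewrite -expr_cardD !subrK.
by rewrite /frob_sub qB mulrBr !opprD addrACA.
Qed.

Lemma frob_sub_is_scalable : scalable frob_sub.
Proof.
move=> a x; rewrite /frob_sub -[a *: x]mulr_algl -[a *: (_ - _)]mulr_algl exprMn.
by rewrite -[q]expn1 expr_card_alg expn1 mulrBr mulrCA.
Qed.

HB.instance Definition _ := GRing.isZmodMorphism.Build L L frob_sub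
  frob_sub_is_zmod_morphism.
HB.instance Definition _ := GRing.isScalable.Build F L L *:%R frob_sub
  frob_sub_is_scalable.

Lemma frob_sub_aspace (K : {aspace L}) y : y \in K -> frob_sub y \in K.
Proof. by move=> yK; rewrite rpredB ?rpredX ?rpredM ?rpredZ ?mem1v. Qed.

Lemma horner_frob_sub_poly y : ('X^q - theta *: 'X)^^.[y] = frob_sub y.
Proof. by rewrite rmorphB /= map_polyXn map_polyZ map_polyX !hornerE. Qed.

Lemma frob_sub_eq0_exprn y k : frob_sub y = 0 -> y ^+ (q ^ k) = (theta ^+ k)%:A * y.
Proof.
move/eqP; rewrite subr_eq0 => /eqP yq; elim: k => [|k IHk].
  by rewrite expr1 expr0 scale1r mul1r.
rewrite expnS exprM yq exprMn IHk expr_card_alg mulrA -!in_algE -rmorphM /=.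
by rewrite exprS.
Qed.

Lemma frob_sub_kernel_expr_dim (K : {subfield L}) y :
  y != 0 -> y \in K -> frob_sub y = 0 -> theta ^+ \dim K = 1.
Proof.
move=> y0 yK /(frob_sub_eq0_exprn (\dim K)) yqK.
move: yK; rewrite Fermat's_little_theorem yqK -{2}[y]mul1r => /eqP/(mulIf y0).
by rewrite -in_algE => /eqP; rewrite fmorph_eq1 => /eqP.
Qed.

Lemma frob_sub_root_XnsubC (c : L) :
  root ('X^(q.-1) - theta%:P)^^ c -> frob_sub c = 0.
Proof.
rewrite /root rmorphB /= map_polyXn map_polyC !hornerE subr_eq0 => /eqP cq1.
have q_gt0 : (0 < q)%N by apply/card_gt0P; exists 0.
by apply/eqP; rewrite subr_eq0 -(prednK q_gt0) exprS cq1 mulrC.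
Qed.

Hypothesis theta_prim : q.-1.-primitive_root theta.

Lemma dvdn_dim_frob_sub_kernel (K : {subfield L}) y :
  y != 0 -> y \in K -> frob_sub y = 0 -> (q.-1 %| \dim K)%N.
Proof.
by move=> y0 yK fy; rewrite (prim_order_dvd theta_prim) (frob_sub_kernel_expr_dim y0 yK fy).
Qed.

Hypothesis q_gt2 : (2 < q)%N.

Lemma frob_sub_inj (K : {subfield L}) :
  coprime (\dim K) q.-1 -> {in K, forall y, frob_sub y = 0 -> y = 0}.
Proof.
move=> coKq y yK fy; apply: contraTeq q_gt2 => y0.
move: coKq; rewrite /coprime gcdnC (gcdn_idPl (dvdn_dim_frob_sub_kernel y0 yK fy)).
by move=> /eqP q1; rewrite -(prednK (ltn_trans _ q_gt2)) ?q1.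
Qed.

Lemma adjoin_frob_sub (a : L) :
  coprime (\dim <<1; a>>) q.-1 -> <<1; frob_sub a>>%VS = <<1; a>>%VS.
Proof.
move=> coaq; have sba : (<<1; frob_sub a>> <= <<1; a>>)%VS.
  by rewrite sub_adjoin1v frob_sub_aspace ?memv_adjoin.
apply/eqP; rewrite eqEsubv sba sub_adjoin1v /=.
apply: (memv_preim_stable_inj (f := frob_sub) sba) (memv_adjoin _ _) (memv_adjoin _ _).
  move=> v; exact: (frob_sub_aspace (K := <<1; frob_sub a>>%AS)).
exact: (frob_sub_inj coaq).
Qed.

Lemma root_XnsubC_neq0 (c : L) : root ('X^(q.-1) - theta%:P)^^ c -> c != 0.
Proof.
apply: contraTneq => ->; rewrite /root rmorphB /= map_polyXn map_polyC !hornerE.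
have q1_gt0 : (0 < q.-1)%N by rewrite -ltnS prednK // (ltn_trans _ q_gt2).
rewrite expr0n (gtn_eqF q1_gt0) sub0r oppr_eq0 fmorph_eq0.
apply/eqP => theta0; move: (prim_expr_order theta_prim).
by rewrite theta0 expr0n (gtn_eqF q1_gt0) => /eqP; rewrite eq_sym oner_eq0.
Qed.

Lemma dim_adjoin_add_frob_sub_kernel (a c : L) :
  coprime (\dim <<1; a>>) q.-1 -> c != 0 -> frob_sub c = 0 ->
  (\dim <<1; a>> * q.-1 <= \dim <<1; a + c>>)%N.
Proof.
move=> coaq c0 fc; have fac : frob_sub (a + c) = frob_sub a by rewrite raddfD /= fc addr0.
have sa_ac : (<<1; a>> <= <<1; a + c>>)%VS.
  by rewrite -adjoin_frob_sub // -fac sub_adjoin1v frob_sub_aspace ?memv_adjoin.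
have c_ac : c \in <<1; a + c>>%VS.
  suff : a + c - a \in <<1; a + c>>%VS by rewrite addrAC subrr add0r.
  by rewrite rpredB ?memv_adjoin // (subvP sa_ac) ?memv_adjoin.
apply: dvdn_leq; first exact: adim_gt0.
rewrite Gauss_dvd // field_dimS //=.
exact: (dvdn_dim_frob_sub_kernel (K := <<1; a + c>>%AS) c0 c_ac fc).
Qed.

End FrobeniusSub.

Lemma exists_roots_in_ext (F : finFieldType) (f g : {poly F}) :
  (1 < size f)%N -> (1 < size g)%N ->
  exists (L : splittingFieldType F) (a c : L),
    root (map_poly (in_alg L) f) a /\ root (map_poly (in_alg L) g) c.
Proof.
move=> sf sg; have f0 : f != 0 by rewrite -size_poly_gt0 ltnW.
have g0 : g != 0 by rewrite -size_poly_gt0 ltnW.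
have [L splitL] := FinSplittingFieldFor (mulf_neq0 f0 g0).
have [a fa] := root_in_splitting_field splitL (dvdp_mulIl f g) sf.
have [c gc] := root_in_splitting_field splitL (dvdp_mulIr f g) sg.
by exists L, a, c.
Qed.

Section LinearizedComposition.

Variables (F : finFieldType) (L : fieldExtType F) (theta : F).
Variables (f psi : {poly F}) (a c : L).
Local Notation q := #|F|.
Local Notation "p ^^" := (map_poly (in_alg L) p) (at level 2, format "p ^^").
Local Notation Xq := ('X^q - theta *: 'X).
Local Notation b := (frob_sub theta a).

Hypotheses (theta_prim : q.-1.-primitive_root theta) (q_gt2 : (2 < q)%N).
Hypotheses (irr_f : irreducible_poly f) (fa : root f^^ a).
Hypothesis coprime_fq : coprime (size f).-1 q.-1.
Hypotheses (psi_neq0 : psi != 0) (psi_b : root psi^^ b).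
Hypothesis psi_min : forall h : {poly F}, h != 0 -> root h^^ b -> (size psi <= size h)%N.
Hypothesis gc : root ('X^(q.-1) - theta%:P)^^ c.

Let dim_a : \dim <<1; a>> = (size f).-1.
Proof. by rewrite (size_irredp_root irr_f fa). Qed.

Lemma size_min_poly_frob_sub : size psi = size f.
Proof.
rewrite (size_min_root_poly psi_neq0 psi_b psi_min) adjoin_frob_sub ?dim_a //.
by rewrite (size_irredp_root irr_f fa).
Qed.

Lemma dvdp_comp_frob_sub : f %| psi \Po Xq.
Proof. by rewrite (dvdp_comp_rootE _ _ irr_f fa) horner_frob_sub_poly. Qed.

Lemma dim_adjoin_add : ((size f).-1 * q.-1 <= \dim <<1; a + c>>)%N.
Proof.
have c0 := root_XnsubC_neq0 theta_prim q_gt2 gc.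
by rewrite -dim_a (dim_adjoin_add_frob_sub_kernel theta_prim q_gt2) ?dim_a ?frob_sub_root_XnsubC.
Qed.

Lemma root_comp_divp_add : root ((psi \Po Xq) %/ f)^^ (a + c).
Proof.
have fc : frob_sub theta c = 0 := frob_sub_root_XnsubC gc.
have Q_ac : root (psi \Po Xq)^^ (a + c).
  by rewrite root_map_comp horner_frob_sub_poly raddfD /= fc addr0.
have f_nac : ~~ root f^^ (a + c).
  apply/negP => /(dim_adjoin_lt_size (irredp_neq0 irr_f)) /(leq_ltn_trans dim_adjoin_add).
  have sf_gt1 : (1 < size f)%N by case: irr_f.
  rewrite -[X in (_ < X)%N](prednK (ltnW sf_gt1)) ltnS -[leqRHS]muln1 leq_pmul2l.
    by rewrite leqNgt -ltnS prednK ?q_gt2 // ltnW // ltnW.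
  by rewrite -ltnS prednK // ltnW.
by move: Q_ac; rewrite -{1}(divpK dvdp_comp_frob_sub) rmorphM rootM (negPf f_nac) orbF.
Qed.

Lemma size_comp_divp : size ((psi \Po Xq) %/ f) = ((size f).-1 * q.-1).+1.
Proof.
have sf : size f = (size f).-1.+1 by rewrite prednK // size_poly_gt0 irredp_neq0.
exact: size_comp_XnsubZX_divp (ltnW q_gt2) (etrans size_min_poly_frob_sub sf) sf.
Qed.

Lemma irredp_comp_divp : irreducible_poly ((psi \Po Xq) %/ f).
Proof.
apply: irredp_min_root_poly root_comp_divp_add _ => [|h h0 hx].
  by rewrite -size_poly_gt0 size_comp_divp.
by rewrite size_comp_divp (leq_ltn_trans dim_adjoin_add) ?dim_adjoin_lt_size.
Qed.

End LinearizedComposition.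

Theorem mainTheorem7 (F : finFieldType) (n : nat) (f psi : {poly F}) (theta : F) :
  (2 < #|F|)%N -> (0 < n)%N -> coprime n (#|F|.-1) ->
  f \is monic -> irreducible_poly f -> size f = n.+1 ->
  (#|F|.-1).-primitive_root theta ->
  let R := ('X^#|F| - theta *: 'X) %% f in
  psi \is monic -> f %| psi \Po R ->
  (forall p : {poly F}, p != 0 -> f %| p \Po R -> (size psi <= size p)%N) ->
  [/\ irreducible_poly psi, size psi = n.+1,
      f %| psi \Po ('X^#|F| - theta *: 'X),
      irreducible_poly ((psi \Po ('X^#|F| - theta *: 'X)) %/ f)
    & size ((psi \Po ('X^#|F| - theta *: 'X)) %/ f) = (n * #|F|.-1).+1].
Proof.
move=> q_gt2 _ co_nq _ irr_f size_f prim R psi_monic f_psiR psi_min.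
have q1_gt0 : (0 < #|F|.-1)%N by rewrite -ltnS prednK // ltnW // ltnW.
have sg : (1 < size ('X^(#|F|.-1) - theta%:P : {poly F})%R)%N by rewrite size_XnsubC.
have [L [a [c [fa gc]]]] := exists_roots_in_ext irr_f.1 sg.
have f_dvdE p : (f %| p \Po R) = root (map_poly (in_alg L) p) (frob_sub theta a).
  by rewrite (dvdp_comp_rootE _ _ irr_f fa) horner_map_modp // horner_frob_sub_poly.
have psi_b : root (map_poly (in_alg L) psi) (frob_sub theta a) by rewrite -f_dvdE.
have psi_minb h : h != 0 -> root (map_poly (in_alg L) h) (frob_sub theta a) ->
    (size psi <= size h)%N.
  by rewrite -f_dvdE; apply: psi_min.
have co_fq : coprime (size f).-1 #|F|.-1 by rewrite size_f.
have psi0 := monic_neq0 psi_monic.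
split.
- exact: irredp_min_root_poly psi0 psi_b psi_minb.
- by rewrite (size_min_poly_frob_sub prim q_gt2 irr_f fa co_fq psi0 psi_b psi_minb).
- exact: dvdp_comp_frob_sub irr_f fa psi_b.
- exact: irredp_comp_divp prim q_gt2 irr_f fa co_fq psi0 psi_b psi_minb gc.
by rewrite (size_comp_divp prim q_gt2 irr_f fa co_fq psi0 psi_b psi_minb) size_f.
Qed.
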